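(* Let $m \ge 1$ and $n \ge 2m+2$ be integers. Then for every real $r$ with $|r|<1$, $$\int_{-1}^1 \frac{T_n(s)(1-s^2)^{m-\frac{1}{2}}}{(s-r)^3}\,ds = (-1)^{m+1}\left(\frac{1}{2}\right)^{2m+1}\frac{\pi}{1-r^2}\sum_{j=0}^{2m-1}(-1)^j\binom{2m-1}{j}(n+1-2m+2j)\Big[(n+2-2m+2j)U_{n-1-2m+2j}(r)-(n-2m+2j)U_{n+1-2m+2j}(r)\Big],$$ where the integral is a Hadamard finite-part integral.
   Context: $T_k(s)=\cos(k\cos^{-1}s)$ and $U_k(s)=\frac{\sin((k+1)\cos^{-1}s)}{\sin(\cos^{-1}s)}$ are the Tchebyshev polynomials of the first and second kinds. For a positive integer $\alpha\ge 2$ and $|r|<1$, the integral $\int_{-1}^1 \frac{D(s)}{(s-r)^\alpha}ds$ is understood in the Hadamard finite-part sense; in particular it satisfies $\int_{-1}^1 \frac{D(s)}{(s-r)^{\alpha}}ds=\frac{1}{\alpha-1}\frac{d}{dr}\int_{-1}^1\frac{D(s)}{(s-r)^{\alpha-1}}ds$, where for $\alpha-1=1$ the right-hand integral is a Cauchy principal value. $\binom{a}{j}=\frac{a!}{j!(a-j)!}$. *)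

From Stdlib Require Import Reals.
From Coquelicot Require Import Coquelicot.
Open Scope R_scope.

Definition chebT (k : nat) (s : R) : R := cos (INR k * acos s).
Definition chebU (k : nat) (s : R) : R := sin (INR (k + 1) * acos s) / sin (acos s).

Definition is_PV (D : R -> R) (r v : R) : Prop :=
  filterlim
    (fun eps => RInt (fun s => D s / (s - r)) (-1) (r - eps)
              + RInt (fun s => D s / (s - r)) (r + eps) 1)
    (at_right 0) (locally v).

(* is_FP D k r v : the Hadamard finite-part integral
   int_{-1}^1 D(s)/(s-r)^(k+1) ds exists and equals v, defined by
   order 1 = principal value, and
   FP int D/(s-r)^(a) = 1/(a-1) d/dr FP int D/(s-r)^(a-1). *)
Fixpoint is_FP (D : R -> R) (k : nat) (r v : R) : Prop :=
  match k with
  | O => is_PV D r v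
  | S k' => exists g : R -> R,
      (forall x, -1 < x < 1 -> is_FP D k' x (g x)) /\
      is_derive g r (INR (S k') * v)
  end.

(* With [s = cos t] the density [T_n(s) (1 - s²)^(m - 1/2)] is [cos (n t) sin^(2m-1) t].
   Applying the (2m-1)-fold difference [g ↦ g x - g (x + 2)] to [z ↦ sin (z t + m PI)] in two
   ways (binomially, and through [sin u - sin (u + 2t) = 2 sin t sin (u + t - PI/2)]) expands
   it into [sum_j ± C(2m-1, j) sin (k_j t)] with [sin (k t) = sqrt (1 - s²) U_(k-1)(s)].
   The principal value of [sin (k acos s) / (s - r)] is [- PI T_k(r)]: for [k = 1] by an
   explicit primitive, in general by the three-term recurrence, since multiplying the density
   by [s] only adds an ordinary integral.  Two differentiations, with [T_k' = k U_(k-1)] and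
   [2 (1 - x²) U_(k-1)' = (k+1) U_(k-2) - (k-1) U_k], give the finite-part value. *)

From Stdlib Require Import Reals Lra Lia.
From Coquelicot Require Import Coquelicot.
Open Scope R_scope.

(* Coquelicot's lemmas specialized to [R -> R]: their structure arguments are not inferred. *)
Lemma cont_const (c x : R) : continuous (fun _ : R => c) x.
Proof. exact (continuous_const (U := R_UniformSpace) (V := R_UniformSpace) c x). Qed.

Lemma cont_id (x : R) : continuous (fun z : R => z) x.
Proof. exact (continuous_id (U := R_UniformSpace) x). Qed.

Lemma cont_plus (f g : R -> R) x :
  continuous f x -> continuous g x -> continuous (fun z => f z + g z) x.
Proof. exact (continuous_plus (K := R_AbsRing) (V := R_NormedModule) f g x). Qed.

Lemma cont_opp (f : R -> R) x : continuous f x -> continuous (fun z => - f z) x.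
Proof. exact (continuous_opp (K := R_AbsRing) (V := R_NormedModule) f x). Qed.

Lemma cont_minus (f g : R -> R) x :
  continuous f x -> continuous g x -> continuous (fun z => f z - g z) x.
Proof. intros Hf Hg. apply cont_plus; [| apply cont_opp]; assumption. Qed.

Lemma cont_mult (f g : R -> R) x :
  continuous f x -> continuous g x -> continuous (fun z => f z * g z) x.
Proof. exact (continuous_mult (K := R_AbsRing) f g x). Qed.

Lemma cont_div (f g : R -> R) x :
  continuous f x -> continuous g x -> g x <> 0 -> continuous (fun z => f z / g z) x.
Proof.
  intros Hf Hg Hg0. apply cont_mult; [exact Hf |].
  apply continuous_Rinv_comp; assumption.
Qed.

Lemma cont_sin (f : R -> R) x : continuous f x -> continuous (fun z => sin (f z)) x.
Proof. apply continuous_sin_comp. Qed.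

Lemma cont_sqrt (f : R -> R) x : continuous f x -> continuous (fun z => sqrt (f z)) x.
Proof. apply continuous_sqrt_comp. Qed.

Lemma cont_ln (f : R -> R) x : continuous f x -> 0 < f x -> continuous (fun z => ln (f z)) x.
Proof.
  intros Hf Hpos. apply (continuous_comp f ln x Hf). apply continuous_ln, Hpos.
Qed.

Lemma cont_Rsqr (f : R -> R) x : continuous f x -> continuous (fun z => (f z)²) x.
Proof. intros Hf. apply cont_mult; exact Hf. Qed.

Create HintDb rcont.
#[export] Hint Resolve cont_const cont_id cont_plus cont_opp cont_minus cont_mult
  cont_Rsqr cont_sin cont_sqrt cont_ln : rcont.

Ltac solve_continuous := auto 20 with rcont.

Lemma is_derive_Rplus (f g : R -> R) x a b :
  is_derive f x a -> is_derive g x b -> is_derive (fun z => f z + g z) x (a + b).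
Proof. exact (is_derive_plus (K := R_AbsRing) (V := R_NormedModule) f g x a b). Qed.

Lemma is_derive_Rminus (f g : R -> R) x a b :
  is_derive f x a -> is_derive g x b -> is_derive (fun z => f z - g z) x (a - b).
Proof. exact (is_derive_minus (K := R_AbsRing) (V := R_NormedModule) f g x a b). Qed.

Lemma is_derive_acos (x : R) : -1 < x < 1 -> is_derive acos x (-1 / sqrt (1 - x²)).
Proof.
  intros Hx. apply is_derive_Reals.
  apply (derive_pt_eq_1 _ _ _ (derivable_pt_acos x Hx)), derive_pt_acos.
Qed.

Lemma acos_le_m1 x : x <= -1 -> acos x = PI.
Proof. intros H. unfold acos. destruct (Rle_dec x (-1)); [reflexivity | lra]. Qed.

Lemma acos_ge_1 x : 1 <= x -> acos x = 0.
Proof.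
  intros H. unfold acos. destruct (Rle_dec x (-1)); [lra |].
  destruct (Rle_dec 1 x); [reflexivity | lra].
Qed.

(* Near [1], [acos z < e] is equivalent to [cos e < z] since cos decreases on [0, PI]. *)
Lemma continuous_acos_1 : continuous acos 1.
Proof.
  apply continuity_pt_filterlim. intros eps Heps.
  pose proof PI_RGT_0 as Hpi.
  set (e := Rmin eps (PI / 2)).
  assert (He : 0 < e) by (apply Rmin_pos; lra).
  assert (He_pi : e <= PI / 2) by apply Rmin_r.
  assert (He_eps : e <= eps) by apply Rmin_l.
  assert (Hcos : 0 <= cos e < 1).
  { split; [apply cos_ge_0; lra |].
    rewrite <- cos_0. apply cos_decreasing_1; lra. }
  exists (1 - cos e). split; [lra |].
  intros z [_ Hz]. unfold dist in *. simpl in *. unfold R_dist in *.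
  apply Rabs_def2 in Hz. rewrite acos_1, Rminus_0_r.
  destruct (Rle_dec 1 z) as [H1 | H1].
  { rewrite acos_ge_1, Rabs_R0 by lra. lra. }
  pose proof (acos_bound z) as Hb.
  rewrite Rabs_pos_eq by lra.
  destruct (Rlt_le_dec (acos z) e) as [Hlt | Hge]; [lra | exfalso].
  assert (cos e >= cos (acos z)).
  { destruct (Rle_lt_or_eq_dec _ _ Hge) as [Hlt | ->]; [| lra].
    apply Rgt_ge, cos_decreasing_1; lra. }
  rewrite cos_acos in H by lra. lra.
Qed.

Lemma continuous_acos (x : R) : continuous acos x.
Proof.
  destruct (Rlt_le_dec x (-1)) as [Hlt | Hge].
  { apply continuous_ext_loc with (fun _ => PI); [| apply cont_const].
    apply (filter_imp (fun z => z < -1)); [intros; symmetry; apply acos_le_m1; lra |].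
    exact (open_lt (-1) x Hlt). }
  destruct (Rle_lt_or_eq_dec _ _ Hge) as [Hgt | <-].
  2: { apply continuous_ext_loc with (fun z => PI - acos (- z)).
       - apply filter_forall. intros z. rewrite acos_opp. simpl. ring.
       - apply cont_minus; [apply cont_const |].
         apply (continuous_comp (fun z => - z) acos); [apply cont_opp, cont_id |].
         replace (- -1) with 1 by ring. apply continuous_acos_1. }
  destruct (Rlt_le_dec x 1) as [Hlt1 | Hge1].
  { apply (ex_derive_continuous (K := R_AbsRing) (V := R_NormedModule)).
    eexists. apply is_derive_acos. lra. }
  destruct (Rle_lt_or_eq_dec _ _ Hge1) as [Hgt1 | <-]; [| apply continuous_acos_1].
  apply continuous_ext_loc with (fun _ => 0); [| apply cont_const].
  apply (filter_imp (fun z => 1 < z)); [intros; symmetry; apply acos_ge_1; lra |].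
  exact (open_gt 1 x Hgt1).
Qed.

#[export] Hint Resolve continuous_acos : rcont.

Lemma ex_RInt_of_continuous (f : R -> R) a b : (forall z, continuous f z) -> ex_RInt f a b.
Proof. intros Hf. apply (ex_RInt_continuous (V := R_CompleteNormedModule)). auto. Qed.

Lemma is_derive_RInt_upper (f : R -> R) a x :
  (forall z, continuous f z) -> is_derive (fun b => RInt f a b) x (f x).
Proof.
  intros Hf. apply (is_derive_RInt (V := R_NormedModule) f _ a); [| apply Hf].
  apply filter_forall. intros b.
  apply (RInt_correct (V := R_CompleteNormedModule)), ex_RInt_of_continuous, Hf.
Qed.

Lemma continuous_RInt_upper (f : R -> R) a x :
  (forall z, continuous f z) -> continuous (fun b => RInt f a b) x.
Proof.
  intros Hf. apply (ex_derive_continuous (K := R_AbsRing) (V := R_NormedModule)).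
  eexists. apply is_derive_RInt_upper, Hf.
Qed.

Lemma continuous_RInt_lower (f : R -> R) b x :
  (forall z, continuous f z) -> continuous (fun a => RInt f a b) x.
Proof.
  intros Hf. apply continuous_ext with (fun a => - RInt f b a).
  - intros a. apply (opp_RInt_swap (V := R_CompleteNormedModule)), ex_RInt_of_continuous, Hf.
  - apply cont_opp, continuous_RInt_upper, Hf.
Qed.

(* Unlike [RInt_Derive], [F] need only be differentiable inside [a, b]: [F] minus the
   integral of [f] is continuous on [a, b] with vanishing derivative inside. *)
Lemma RInt_of_derive_interior (f F : R -> R) a b :
  a <= b -> (forall z, continuous f z) ->
  (forall x, a <= x <= b -> continuous F x) ->
  (forall x, a < x < b -> is_derive F x (f x)) ->
  RInt f a b = F b - F a.
Proof.
  intros Hab Hf HF HdF.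
  set (G := fun x => F x - RInt f a x).
  assert (HdG : forall x, Rmin a b < x < Rmax a b -> is_derive G x 0).
  { intros x Hx. rewrite Rmin_left, Rmax_right in Hx by lra.
    replace 0 with (f x - f x) by ring.
    apply (is_derive_minus (K := R_AbsRing) (V := R_NormedModule));
      [apply HdF; lra | apply is_derive_RInt_upper, Hf]. }
  assert (HcG : forall x, Rmin a b <= x <= Rmax a b -> continuity_pt G x).
  { intros x Hx. rewrite Rmin_left, Rmax_right in Hx by lra.
    apply continuity_pt_filterlim, cont_minus; [apply HF; lra |].
    apply continuous_RInt_upper, Hf. }
  destruct (MVT_gen G a b (fun _ => 0) HdG HcG) as [c [_ Hc]].
  unfold G in Hc. rewrite (RInt_point (V := R_CompleteNormedModule)) in Hc.
  unfold zero in Hc. simpl in Hc. lra.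
Qed.

Lemma RInt_lin (f g : R -> R) a b lo hi :
  ex_RInt f lo hi -> ex_RInt g lo hi ->
  RInt (fun s => a * f s + b * g s) lo hi = a * RInt f lo hi + b * RInt g lo hi.
Proof.
  intros Hf Hg.
  rewrite (RInt_plus (V := R_CompleteNormedModule) (fun s => a * f s) (fun s => b * g s)).
  - pose proof (RInt_scal (V := R_CompleteNormedModule) f lo hi a Hf) as Ef.
    pose proof (RInt_scal (V := R_CompleteNormedModule) g lo hi b Hg) as Eg.
    unfold scal in Ef, Eg. simpl in Ef, Eg. unfold mult in Ef, Eg. simpl in Ef, Eg.
    rewrite Ef, Eg. reflexivity.
  - apply (ex_RInt_scal (V := R_CompleteNormedModule) f lo hi a Hf).
  - apply (ex_RInt_scal (V := R_CompleteNormedModule) g lo hi b Hg).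
Qed.

Lemma RInt_Chasles_continuous (f : R -> R) a b c :
  (forall z, continuous f z) -> RInt f a b + RInt f b c = RInt f a c.
Proof.
  intros Hf. apply (RInt_Chasles (V := R_CompleteNormedModule)); apply ex_RInt_of_continuous, Hf.
Qed.

(** * Cauchy principal values *)

Definition pv_trunc (D : R -> R) (y e : R) : R :=
  RInt (fun s => D s / (s - y)) (-1) (y - e) + RInt (fun s => D s / (s - y)) (y + e) 1.

Lemma at_right_pv_window y : -1 < y < 1 ->
  at_right 0 (fun e => 0 < e /\ -1 < y - e /\ y + e < 1).
Proof.
  intros Hy. assert (Hd : 0 < Rmin (1 + y) (1 - y)) by (apply Rmin_pos; lra).
  exists (mkposreal _ Hd). intros e He Hpos. simpl in He.
  apply Rabs_def2 in He. unfold minus, plus, opp in He. simpl in He.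
  pose proof (Rmin_l (1 + y) (1 - y)). pose proof (Rmin_r (1 + y) (1 - y)). lra.
Qed.

Lemma ex_RInt_div_sub (D : R -> R) y a b :
  a <= b -> (b < y \/ y < a) -> (forall z, continuous D z) ->
  ex_RInt (fun s => D s / (s - y)) a b.
Proof.
  intros Hab Hy HD. apply (ex_RInt_continuous (V := R_CompleteNormedModule)).
  intros z Hz. rewrite Rmin_left, Rmax_right in Hz by lra.
  apply cont_div; solve_continuous. lra.
Qed.

Lemma is_PV_of_trunc_eq (D Phi : R -> R) y :
  -1 < y < 1 ->
  (forall e, 0 < e -> -1 < y - e -> y + e < 1 -> pv_trunc D y e = Phi e) ->
  continuous Phi 0 -> is_PV D y (Phi 0).
Proof.
  intros Hy Heq Hc. unfold is_PV.
  apply filterlim_ext_loc with Phi.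
  - eapply filter_imp; [| apply (at_right_pv_window y Hy)].
    intros e (He & Hl & Hr). symmetry. apply Heq; assumption.
  - eapply filterlim_filter_le_1; [apply filter_le_within | exact Hc].
Qed.

Lemma is_PV_ext (D1 D2 : R -> R) y v : -1 < y < 1 ->
  (forall s, -1 <= s <= 1 -> D1 s = D2 s) -> is_PV D1 y v -> is_PV D2 y v.
Proof.
  intros Hy Heq HP. unfold is_PV in *.
  apply filterlim_ext_loc with (pv_trunc D1 y); [| exact HP].
  eapply filter_imp; [| apply (at_right_pv_window y Hy)].
  intros e (He & Hl & Hr). unfold pv_trunc.
  f_equal; apply (RInt_ext (V := R_CompleteNormedModule));
    intros x Hx; rewrite Rmin_left, Rmax_right in Hx by lra;
    simpl; rewrite Heq by lra; reflexivity.
Qed.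

Lemma is_PV_lin (D1 D2 : R -> R) y v1 v2 a b : -1 < y < 1 ->
  (forall z, continuous D1 z) -> (forall z, continuous D2 z) ->
  is_PV D1 y v1 -> is_PV D2 y v2 ->
  is_PV (fun s => a * D1 s + b * D2 s) y (a * v1 + b * v2).
Proof.
  intros Hy HD1 HD2 HP1 HP2. unfold is_PV.
  apply filterlim_ext_loc with (fun e => a * pv_trunc D1 y e + b * pv_trunc D2 y e).
  - eapply filter_imp; [| apply (at_right_pv_window y Hy)].
    intros e (He & Hl & Hr). unfold pv_trunc.
    assert (Hsplit : forall lo hi, lo <= hi -> (hi < y \/ y < lo) ->
      RInt (fun s => (a * D1 s + b * D2 s) / (s - y)) lo hi =
      a * RInt (fun s => D1 s / (s - y)) lo hi + b * RInt (fun s => D2 s / (s - y)) lo hi).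
    { intros lo hi Hlh Hout. rewrite <- RInt_lin by (apply ex_RInt_div_sub; assumption).
      apply (RInt_ext (V := R_CompleteNormedModule)). intros x _. simpl. unfold Rdiv. ring. }
    rewrite !Hsplit by lra. ring.
  - apply (filterlim_comp_2 (G := locally (a * v1)) (H := locally (b * v2))
      (fun e => a * pv_trunc D1 y e) (fun e => b * pv_trunc D2 y e) Rplus).
    + apply filterlim_comp with (1 := HP1).
      apply (filterlim_scal_r (K := R_AbsRing) (V := R_NormedModule)).
    + apply filterlim_comp with (1 := HP2).
      apply (filterlim_scal_r (K := R_AbsRing) (V := R_NormedModule)).
    + apply (filterlim_plus (K := R_AbsRing) (V := R_NormedModule)).
Qed.

Lemma is_PV_scal (D : R -> R) y v a : -1 < y < 1 -> (forall z, continuous D z) ->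
  is_PV D y v -> is_PV (fun s => a * D s) y (a * v).
Proof.
  intros Hy HD HP. replace (a * v) with (a * v + 0 * v) by ring.
  apply is_PV_ext with (fun s => a * D s + 0 * D s); [exact Hy | intros; ring |].
  apply is_PV_lin; assumption.
Qed.

Lemma continuous_sum_f_R0 (F : nat -> R -> R) N x :
  (forall j z, continuous (F j) z) -> continuous (fun s => sum_f_R0 (fun j => F j s) N) x.
Proof. intros HF. induction N; simpl; solve_continuous. Qed.

Lemma is_PV_sum (c : nat -> R) (F : nat -> R -> R) (V : nat -> R) y N : -1 < y < 1 ->
  (forall j z, continuous (F j) z) -> (forall j, (j <= N)%nat -> is_PV (F j) y (V j)) ->
  is_PV (fun s => sum_f_R0 (fun j => c j * F j s) N) y (sum_f_R0 (fun j => c j * V j) N).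
Proof.
  intros Hy HF HV. induction N as [| N IH]; simpl.
  - apply is_PV_scal; auto.
  - replace (sum_f_R0 (fun j => c j * V j) N + c (S N) * V (S N))
      with (1 * sum_f_R0 (fun j => c j * V j) N + c (S N) * V (S N)) by ring.
    apply is_PV_ext
      with (fun s => 1 * sum_f_R0 (fun j => c j * F j s) N + c (S N) * F (S N) s);
      [assumption | intros; ring |].
    apply is_PV_lin; [assumption | | solve_continuous | | apply HV; lia].
    + intros z. apply continuous_sum_f_R0. solve_continuous.
    + apply IH. intros j Hj. apply HV. lia.
Qed.

Lemma is_PV_mul_sub (G : R -> R) y : -1 < y < 1 -> (forall z, continuous G z) ->
  is_PV (fun s => (s - y) * G s) y (RInt G (-1) 1).
Proof.
  intros Hy HG.
  set (Phi := fun e => RInt G (-1) (y - e) + RInt G (y + e) 1).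
  replace (RInt G (-1) 1) with (Phi 0).
  2: { unfold Phi. rewrite Rminus_0_r, Rplus_0_r. apply RInt_Chasles_continuous, HG. }
  apply is_PV_of_trunc_eq; [assumption | |].
  - intros e He Hl Hr. unfold pv_trunc, Phi.
    f_equal; apply (RInt_ext (V := R_CompleteNormedModule));
      intros x Hx; rewrite Rmin_left, Rmax_right in Hx by lra; simpl; field; lra.
  - apply cont_plus.
    + apply (continuous_comp (fun e => y - e) (fun b => RInt G (-1) b)); solve_continuous.
      apply continuous_RInt_upper, HG.
    + apply (continuous_comp (fun e => y + e) (fun a => RInt G a 1)); solve_continuous.
      apply continuous_RInt_lower, HG.
Qed.

Lemma RInt_inv_sub_below a b y : a <= b < y ->
  RInt (fun s => 1 / (s - y)) a b = ln (y - b) - ln (y - a).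
Proof.
  intros Hab. apply (is_RInt_unique (V := R_CompleteNormedModule)).
  apply (is_RInt_derive (V := R_CompleteNormedModule) (fun s => ln (y - s)));
    intros x Hx; rewrite Rmin_left, Rmax_right in Hx by lra.
  - auto_derive; [lra | field; lra].
  - apply cont_div; solve_continuous. lra.
Qed.

Lemma RInt_inv_sub_above a b y : y < a <= b ->
  RInt (fun s => 1 / (s - y)) a b = ln (b - y) - ln (a - y).
Proof.
  intros Hab. apply (is_RInt_unique (V := R_CompleteNormedModule)).
  apply (is_RInt_derive (V := R_CompleteNormedModule) (fun s => ln (s - y)));
    intros x Hx; rewrite Rmin_left, Rmax_right in Hx by lra.
  - auto_derive; [lra | field; lra].
  - apply cont_div; solve_continuous. lra.
Qed.

Lemma is_PV_one y : -1 < y < 1 -> is_PV (fun _ => 1) y (ln (1 - y) - ln (1 + y)).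
Proof.
  intros Hy.
  apply (is_PV_of_trunc_eq _ (fun _ => ln (1 - y) - ln (1 + y))); solve_continuous.
  intros e He Hl Hr. unfold pv_trunc.
  rewrite RInt_inv_sub_below, RInt_inv_sub_above by lra.
  replace (y - (y - e)) with (y + e - y) by ring.
  replace (y - -1) with (1 + y) by ring. ring.
Qed.

Lemma is_PV_mul_id (D : R -> R) y v : -1 < y < 1 -> (forall z, continuous D z) ->
  is_PV D y v -> is_PV (fun s => s * D s) y (RInt D (-1) 1 + y * v).
Proof.
  intros Hy HD HP.
  replace (RInt D (-1) 1 + y * v) with (1 * RInt D (-1) 1 + y * v) by ring.
  apply is_PV_ext with (fun s => 1 * ((s - y) * D s) + y * D s); [assumption | intros; ring |].
  apply is_PV_lin; solve_continuous.
  apply is_PV_mul_sub; assumption.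
Qed.

(** * The principal value of the semicircle weight *)

Lemma sqrt_1_minus_sq_pos s : -1 < s < 1 -> 0 < sqrt (1 - s²).
Proof. intros Hs. apply sqrt_lt_R0. unfold Rsqr. nra. Qed.

Lemma sqrt_1_minus_sq_mul s : -1 <= s <= 1 -> sqrt (1 - s²) * sqrt (1 - s²) = 1 - s².
Proof. intros Hs. apply sqrt_sqrt. unfold Rsqr. nra. Qed.

Section SqrtWeight.

Variable y : R.
Hypothesis Hy : -1 < y < 1.

Local Notation c := (sqrt (1 - y²)).

(* Rationalizing [sqrt (1 - s²) - c] leaves [(s - y) Q(s)] with [Q] continuous. *)
Definition sqrt_weight_quot (s : R) : R := - (s + y) / (sqrt (1 - s²) + c).

Definition sqrt_weight_quot_prim (s : R) : R :=
  sqrt (1 - s²) - c * ln (1 - y * s + c * sqrt (1 - s²)) + y * acos s.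

Lemma sqrt_weight_decomp s : -1 <= s <= 1 ->
  sqrt (1 - s²) = (s - y) * sqrt_weight_quot s + c.
Proof.
  intros Hs. unfold sqrt_weight_quot.
  pose proof (sqrt_1_minus_sq_mul s Hs) as Ew. pose proof (sqrt_1_minus_sq_mul y ltac:(lra)) as Ec.
  pose proof (sqrt_1_minus_sq_pos y Hy). pose proof (sqrt_pos (1 - s²)).
  set (w := sqrt (1 - s²)) in *.
  assert (E : (s - y) * - (s + y) = (w - c) * (w + c)).
  { replace ((w - c) * (w + c)) with (w * w - c * c) by ring.
    rewrite Ew, Ec. unfold Rsqr. ring. }
  unfold Rdiv. rewrite <- Rmult_assoc, E. field. lra.
Qed.

Lemma sqrt_weight_log_arg_pos s : -1 <= s <= 1 -> 0 < 1 - y * s + c * sqrt (1 - s²).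
Proof.
  intros Hs. pose proof (sqrt_1_minus_sq_pos y Hy). pose proof (sqrt_pos (1 - s²)).
  assert (0 <= c * sqrt (1 - s²)) by (apply Rmult_le_pos; lra).
  assert (y * s < 1).
  { destruct (Rle_lt_or_eq_dec s 1) as [Hs1 | ->]; [lra | | lra].
    assert (0 <= (1 - y) * (1 + s)) by (apply Rmult_le_pos; lra).
    assert (0 < (1 + y) * (1 - s)) by (apply Rmult_lt_0_compat; lra).
    lra. }
  lra.
Qed.

Lemma continuous_sqrt_weight_quot z : continuous sqrt_weight_quot z.
Proof.
  pose proof (sqrt_1_minus_sq_pos y Hy). pose proof (sqrt_pos (1 - z²)).
  unfold sqrt_weight_quot. apply cont_div; unfold Rsqr in *; solve_continuous. lra.
Qed.

Lemma is_derive_sqrt_weight_quot_prim s : -1 < s < 1 ->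
  is_derive sqrt_weight_quot_prim s (sqrt_weight_quot s).
Proof.
  intros Hs. unfold sqrt_weight_quot_prim.
  pose proof (sqrt_weight_log_arg_pos s ltac:(lra)) as HN.
  pose proof (sqrt_1_minus_sq_pos s Hs) as Hw. pose proof (sqrt_1_minus_sq_pos y Hy).
  pose proof (sqrt_1_minus_sq_mul s ltac:(lra)) as Ew.
  pose proof (sqrt_1_minus_sq_mul y ltac:(lra)) as Ec.
  set (w := sqrt (1 - s²)) in *.
  assert (Hd : is_derive (fun s => sqrt (1 - s²) - c * ln (1 - y * s + c * sqrt (1 - s²))) s
                 (- s / w + c * (y + c * s / w) / (1 - y * s + c * w))).
  { auto_derive; replace (1 + - s²) with (1 - s²) by ring; fold w.
    - repeat split; [unfold Rsqr; nra | unfold Rsqr; nra | lra].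
    - field. lra. }
  set (N := 1 - y * s + c * w) in *.
  assert (Hkey : (y * w + c * s) * (w + c) = (s + y) * N).
  { unfold N.
    replace ((y * w + c * s) * (w + c)) with (y * (w * w) + c * (y * w + s * w) + (c * c) * s)
      by ring.
    rewrite Ew, Ec. unfold Rsqr. ring. }
  replace (sqrt_weight_quot s) with (- s / w + c * (y + c * s / w) / N + y * (-1 / w)).
  - apply is_derive_Rplus; [exact Hd |]. apply is_derive_scal, is_derive_acos, Hs.
  - unfold sqrt_weight_quot. fold w.
    replace (- s / w + c * (y + c * s / w) / N + y * (-1 / w))
      with (- (s + y) / w + c * ((y * w + c * s) * (w + c)) / (w * N * (w + c)))
      by (field; repeat split; lra).
    rewrite Hkey. field. repeat split; lra.
Qed.

Lemma RInt_sqrt_weight_quot :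
  RInt sqrt_weight_quot (-1) 1 = - PI * y - c * ln (1 - y) + c * ln (1 + y).
Proof.
  rewrite (RInt_of_derive_interior _ sqrt_weight_quot_prim); [| lra | | |].
  - unfold sqrt_weight_quot_prim. rewrite acos_1, acos_le_m1 by lra.
    replace (1 - 1²) with 0 by (unfold Rsqr; ring).
    replace (1 - (-1)²) with 0 by (unfold Rsqr; ring).
    rewrite sqrt_0.
    replace (1 - y * 1 + c * 0) with (1 - y) by ring.
    replace (1 - y * -1 + c * 0) with (1 + y) by ring. simpl. ring.
  - apply continuous_sqrt_weight_quot.
  - intros x Hx. pose proof (sqrt_weight_log_arg_pos x Hx).
    unfold sqrt_weight_quot_prim. solve_continuous.
  - apply is_derive_sqrt_weight_quot_prim.
Qed.

End SqrtWeight.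

Lemma is_PV_sqrt y : -1 < y < 1 -> is_PV (fun s => sqrt (1 - s²)) y (- PI * y).
Proof.
  intros Hy. set (c := sqrt (1 - y²)).
  replace (- PI * y) with (1 * RInt (sqrt_weight_quot y) (-1) 1 + c * (ln (1 - y) - ln (1 + y)))
    by (rewrite RInt_sqrt_weight_quot by exact Hy; fold c; ring).
  apply is_PV_ext with (fun s => 1 * ((s - y) * sqrt_weight_quot y s) + c * 1);
    [exact Hy | intros s Hs; rewrite (sqrt_weight_decomp y Hy s Hs); fold c; ring |].
  apply is_PV_lin; solve_continuous.
  - intros z. apply cont_mult; solve_continuous. apply continuous_sqrt_weight_quot, Hy.
  - apply is_PV_mul_sub; [exact Hy |]. apply continuous_sqrt_weight_quot, Hy.
  - apply is_PV_one, Hy.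
Qed.

(** * Principal values of [sin (k acos s)] *)

(* [sin (k acos s)] is [sqrt (1 - s²) * U_(k-1)(s)] on [-1, 1] for [k >= 1]. *)
Definition chebUw (k : nat) (s : R) : R := sin (INR k * acos s).

Lemma continuous_chebUw k z : continuous (chebUw k) z.
Proof. unfold chebUw. solve_continuous. Qed.

Lemma sin_add_sin_shift a t : sin ((a + 1) * t) + sin ((a - 1) * t) = 2 * cos t * sin (a * t).
Proof.
  replace ((a + 1) * t) with (a * t + t) by ring. replace ((a - 1) * t) with (a * t - t) by ring.
  rewrite sin_plus, sin_minus. ring.
Qed.

Lemma cos_add_cos_shift a t : cos ((a + 1) * t) + cos ((a - 1) * t) = 2 * cos t * cos (a * t).
Proof.
  replace ((a + 1) * t) with (a * t + t) by ring. replace ((a - 1) * t) with (a * t - t) by ring.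
  rewrite cos_plus, cos_minus. ring.
Qed.

Lemma cos_sub_cos_shift a t : cos ((a - 1) * t) - cos ((a + 1) * t) = 2 * sin (a * t) * sin t.
Proof.
  replace ((a + 1) * t) with (a * t + t) by ring. replace ((a - 1) * t) with (a * t - t) by ring.
  rewrite cos_plus, cos_minus. ring.
Qed.

Lemma sin_INR_mul_PI j : sin (INR j * PI) = 0.
Proof. apply sin_eq_0_1. exists (Z.of_nat j). rewrite INR_IZR_INZ. reflexivity. Qed.

Lemma chebUw_rec k s : -1 <= s <= 1 ->
  chebUw (S (S k)) s = 2 * s * chebUw (S k) s - chebUw k s.
Proof.
  intros Hs. unfold chebUw.
  pose proof (sin_add_sin_shift (INR (S k)) (acos s)) as E.
  rewrite cos_acos in E by exact Hs.
  rewrite <- S_INR in E. replace (INR (S k) - 1) with (INR k) in E by (rewrite S_INR; ring).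
  lra.
Qed.

Lemma chebT_rec k y : -1 <= y <= 1 -> chebT (S (S k)) y = 2 * y * chebT (S k) y - chebT k y.
Proof.
  intros Hy. unfold chebT.
  pose proof (cos_add_cos_shift (INR (S k)) (acos y)) as E.
  rewrite cos_acos in E by exact Hy.
  rewrite <- S_INR in E. replace (INR (S k) - 1) with (INR k) in E by (rewrite S_INR; ring).
  lra.
Qed.

Lemma is_derive_sin_mul_acos a s : -1 < s < 1 ->
  is_derive (fun s => sin (a * acos s)) s (- a * cos (a * acos s) / sqrt (1 - s²)).
Proof.
  intros Hs. pose proof (sqrt_1_minus_sq_pos s Hs).
  replace (- a * cos (a * acos s) / sqrt (1 - s²))
    with (scal (a * (-1 / sqrt (1 - s²))) (cos (a * acos s)))
    by (unfold scal; simpl; unfold mult; simpl; field; lra).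
  apply (is_derive_comp sin (fun s => a * acos s)).
  - apply is_derive_Reals, derivable_pt_lim_sin.
  - apply is_derive_scal, is_derive_acos, Hs.
Qed.

Lemma is_derive_cos_mul_acos a s : -1 < s < 1 ->
  is_derive (fun s => cos (a * acos s)) s (a * sin (a * acos s) / sqrt (1 - s²)).
Proof.
  intros Hs. pose proof (sqrt_1_minus_sq_pos s Hs).
  replace (a * sin (a * acos s) / sqrt (1 - s²))
    with (scal (a * (-1 / sqrt (1 - s²))) (- sin (a * acos s)))
    by (unfold scal; simpl; unfold mult; simpl; field; lra).
  apply (is_derive_comp cos (fun s => a * acos s)).
  - apply is_derive_Reals, derivable_pt_lim_cos.
  - apply is_derive_scal, is_derive_acos, Hs.
Qed.

Lemma RInt_chebUw_1 : RInt (chebUw 1) (-1) 1 = PI / 2.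
Proof.
  rewrite (RInt_of_derive_interior _ (fun s => / 2 * (/ 2 * sin (2 * acos s) - acos s)));
    [| lra | apply continuous_chebUw | intros; solve_continuous |].
  - rewrite acos_1, acos_le_m1 by lra. rewrite Rmult_0_r, sin_0, sin_2PI. simpl. field.
  - intros x Hx. pose proof (sqrt_1_minus_sq_pos x Hx).
    replace (chebUw 1 x)
      with (/ 2 * (/ 2 * (- 2 * cos (2 * acos x) / sqrt (1 - x²)) - (-1 / sqrt (1 - x²)))).
    + apply is_derive_scal, is_derive_Rminus; [apply is_derive_scal |].
      * apply is_derive_sin_mul_acos, Hx.
      * apply is_derive_acos, Hx.
    + unfold chebUw. rewrite cos_2a_sin, Rmult_1_l, sin_acos by lra.
      field. lra.
Qed.

(* The primitive [(sin ((k+1) t) / (k+1) - sin ((k-1) t) / (k-1)) / 2] at [t = acos s]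
   vanishes at both ends since [k ± 1] are integers. *)
Lemma RInt_chebUw k : (2 <= k)%nat -> RInt (chebUw k) (-1) 1 = 0.
Proof.
  intros Hk. assert (HK : 2 <= INR k) by (apply (le_INR 2); exact Hk).
  set (K := INR k) in HK |- *.
  assert (EK1 : K + 1 = INR (S k)) by (unfold K; rewrite S_INR; ring).
  assert (EK2 : K - 1 = INR (k - 1)) by (unfold K; rewrite minus_INR by lia; simpl; ring).
  rewrite (RInt_of_derive_interior _ (fun s => / 2 * (/ (K + 1) * sin ((K + 1) * acos s)
                                                    - / (K - 1) * sin ((K - 1) * acos s))));
    [| lra | apply continuous_chebUw | intros; solve_continuous |].
  - rewrite acos_1, acos_le_m1 by lra. rewrite !Rmult_0_r, sin_0, EK1, EK2, !sin_INR_mul_PI.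
    simpl. ring.
  - intros x Hx. pose proof (sqrt_1_minus_sq_pos x Hx).
    replace (chebUw k x)
      with (/ 2 * (/ (K + 1) * (- (K + 1) * cos ((K + 1) * acos x) / sqrt (1 - x²))
                 - / (K - 1) * (- (K - 1) * cos ((K - 1) * acos x) / sqrt (1 - x²)))).
    + apply is_derive_scal, is_derive_Rminus; apply is_derive_scal, is_derive_sin_mul_acos, Hx.
    + unfold chebUw. fold K.
      pose proof (cos_sub_cos_shift K (acos x)) as E. rewrite sin_acos in E by lra.
      replace (cos ((K - 1) * acos x))
        with (cos ((K + 1) * acos x) + 2 * sin (K * acos x) * sqrt (1 - x²)) by lra.
      field. repeat split; lra.
Qed.

Lemma is_PV_zero y : -1 < y < 1 -> is_PV (fun _ => 0) y 0.
Proof.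
  intros Hy. pose proof (is_PV_scal _ y _ 0 Hy (cont_const 1) (is_PV_one y Hy)) as H.
  rewrite !Rmult_0_l in H. exact H.
Qed.

Lemma is_PV_chebUw_rec y k v1 v0 : -1 < y < 1 ->
  is_PV (chebUw (S k)) y v1 -> is_PV (chebUw k) y v0 ->
  is_PV (chebUw (S (S k))) y (2 * (RInt (chebUw (S k)) (-1) 1 + y * v1) + -1 * v0).
Proof.
  intros Hy HP1 HP0.
  apply is_PV_ext with (fun s => 2 * (s * chebUw (S k) s) + -1 * chebUw k s);
    [exact Hy | intros s Hs; rewrite chebUw_rec by exact Hs; ring |].
  apply is_PV_lin; [exact Hy | | apply continuous_chebUw | | exact HP0].
  - intros z. apply cont_mult; [apply cont_id | apply continuous_chebUw].
  - apply is_PV_mul_id; [exact Hy | apply continuous_chebUw | exact HP1].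
Qed.

Lemma is_PV_chebUw y k : -1 < y < 1 -> (1 <= k)%nat ->
  is_PV (chebUw k) y (- PI * chebT k y).
Proof.
  intros Hy Hk.
  assert (Hpair : forall j, is_PV (chebUw (S j)) y (- PI * chebT (S j) y) /\
                            is_PV (chebUw (S (S j))) y (- PI * chebT (S (S j)) y)).
  { induction j as [| j [IH1 IH2]].
    - assert (HP1 : is_PV (chebUw 1) y (- PI * chebT 1 y)).
      { unfold chebT. simpl INR. rewrite Rmult_1_l, cos_acos by lra.
        apply is_PV_ext with (fun s => sqrt (1 - s²)); [exact Hy | | apply is_PV_sqrt, Hy].
        intros s Hs. unfold chebUw. simpl INR. rewrite Rmult_1_l, sin_acos by exact Hs.
        reflexivity. }
      assert (HP0 : is_PV (chebUw 0) y 0).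
      { apply is_PV_ext with (fun _ => 0); [exact Hy | | apply is_PV_zero, Hy].
        intros s _. unfold chebUw. simpl INR. rewrite Rmult_0_l, sin_0. reflexivity. }
      split; [exact HP1 |].
      replace (- PI * chebT 2 y)
        with (2 * (RInt (chebUw 1) (-1) 1 + y * (- PI * chebT 1 y)) + -1 * 0).
      + apply is_PV_chebUw_rec; assumption.
      + rewrite RInt_chebUw_1, chebT_rec by lra.
        unfold chebT. simpl INR. rewrite Rmult_0_l, Rmult_1_l, cos_0, cos_acos by lra. field.
    - split; [exact IH2 |].
      replace (- PI * chebT (S (S (S j))) y)
        with (2 * (RInt (chebUw (S (S j))) (-1) 1 + y * (- PI * chebT (S (S j)) y))
              + -1 * (- PI * chebT (S j) y)).
      + apply is_PV_chebUw_rec; assumption.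
      + rewrite RInt_chebUw by lia. rewrite (chebT_rec (S j)) by lra. ring. }
  destruct k as [| k]; [lia |]. exact (proj1 (Hpair k)).
Qed.

(** * Finite differences and the density *)

Fixpoint diff2 (p : nat) (g : R -> R) (x : R) : R :=
  match p with
  | O => g x
  | S p' => diff2 p' g x - diff2 p' g (x + 2)
  end.

(* Pascal's triangle, which unlike [Binomial.C] vanishes above the diagonal. *)
Fixpoint binom (p j : nat) : R :=
  match p, j with
  | O, O => 1
  | O, S _ => 0
  | S _, O => 1
  | S p', S j' => binom p' j' + binom p' (S j')
  end.

Lemma binom_0 p : binom p 0 = 1.
Proof. destruct p; reflexivity. Qed.

Lemma binom_gt p j : (p < j)%nat -> binom p j = 0.
Proof.
  revert j. induction p as [| p IH]; intros [| j] Hj; try lia; [reflexivity |].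
  simpl. rewrite !IH by lia. ring.
Qed.

Lemma binom_C p j : (j <= p)%nat -> binom p j = Binomial.C p j.
Proof.
  revert j. induction p as [| p IH]; intros [| j] Hj.
  - rewrite C_n_0. reflexivity.
  - lia.
  - rewrite binom_0, C_n_0. reflexivity.
  - simpl. destruct (Nat.eq_dec j p) as [-> | Hne].
    + rewrite (binom_gt p (S p)), IH, !C_n_n by lia. ring.
    + rewrite !IH by lia. apply pascal. lia.
Qed.

Lemma diff2_binom p (g : R -> R) x :
  diff2 p g x = sum_f_R0 (fun j => (-1) ^ j * binom p j * g (x + 2 * INR j)) p.
Proof.
  revert x. induction p as [| p IH]; intros x.
  - simpl. rewrite Rmult_0_r, Rplus_0_r. ring.
  - simpl diff2. rewrite !IH.
    set (a := fun j => (-1) ^ j * binom p j * g (x + 2 * INR j)).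
    set (b := fun j => (-1) ^ j * binom p j * g (x + 2 + 2 * INR j)).
    change (sum_f_R0 a p - sum_f_R0 b p =
            sum_f_R0 (fun j => (-1) ^ j * binom (S p) j * g (x + 2 * INR j)) (S p)).
    assert (Ha : sum_f_R0 a p = a 0%nat + sum_f_R0 (fun i => a (S i)) p).
    { pose proof (decomp_sum a (S p) (Nat.lt_0_succ p)) as E.
      change (Init.Nat.pred (S p)) with p in E.
      rewrite tech5 in E. unfold a at 2 in E. rewrite binom_gt in E by lia. lra. }
    assert (Ha0 : a 0%nat = g x).
    { unfold a. rewrite binom_0. simpl. rewrite Rmult_0_r, Rplus_0_r. ring. }
    rewrite (decomp_sum _ (S p)) by lia. change (Init.Nat.pred (S p)) with p.
    rewrite (sum_eq (fun i => (-1) ^ S i * binom (S p) (S i) * g (x + 2 * INR (S i)))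
                    (fun i => a (S i) - b i)).
    + rewrite minus_sum, Ha, Ha0, binom_0. simpl. rewrite Rmult_0_r, Rplus_0_r. ring.
    + intros i _. unfold a, b. rewrite S_INR.
      replace (x + 2 * (INR i + 1)) with (x + 2 + 2 * INR i) by ring.
      change ((-1) ^ S i) with (-1 * (-1) ^ i).
      change (binom (S p) (S i)) with (binom p i + binom p (S i)). ring.
Qed.

Lemma sin_sub_sin_shift u t : sin u - sin (u + 2 * t) = 2 * sin t * sin (u + t - PI / 2).
Proof.
  replace u with ((u + t) - t) at 1 by ring.
  replace (u + 2 * t) with ((u + t) + t) by ring.
  rewrite (sin_minus (u + t) t), (sin_plus (u + t) t), (sin_minus (u + t) (PI / 2)).
  rewrite cos_PI2, sin_PI2. ring.
Qed.

Lemma diff2_sin p t b x :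
  diff2 p (fun z => sin (z * t + b)) x =
  (2 * sin t) ^ p * sin ((x + INR p) * t + b - INR p * (PI / 2)).
Proof.
  revert x. induction p as [| p IH]; intros x.
  - simpl. replace ((x + 0) * t + b - 0 * (PI / 2)) with (x * t + b) by ring. ring.
  - simpl diff2. rewrite !IH, <- Rmult_minus_distr_l.
    replace ((x + 2 + INR p) * t + b - INR p * (PI / 2))
      with ((x + INR p) * t + b - INR p * (PI / 2) + 2 * t) by ring.
    rewrite sin_sub_sin_shift, S_INR. simpl pow.
    replace ((x + INR p) * t + b - INR p * (PI / 2) + t - PI / 2)
      with ((x + (INR p + 1)) * t + b - (INR p + 1) * (PI / 2)) by ring.
    ring.
Qed.

Lemma sin_add_INR_mul_PI z m : sin (z + INR m * PI) = (-1) ^ m * sin z.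
Proof.
  induction m as [| m IH].
  - simpl. rewrite Rmult_0_l, Rplus_0_r. ring.
  - rewrite S_INR. replace (z + (INR m + 1) * PI) with (z + INR m * PI + PI) by ring.
    rewrite sin_plus, sin_PI, cos_PI, IH. simpl. ring.
Qed.

(* [diff2] of [z ↦ sin (z t + m PI)] from [a - (2m - 1)], read in two ways. *)
Lemma sin_pow_odd_mul_cos m a t : (1 <= m)%nat ->
  sin t ^ (2 * m - 1) * cos (a * t) =
  (1 / 2) ^ (2 * m - 1) * (-1) ^ m *
  sum_f_R0 (fun j => (-1) ^ j * Binomial.C (2 * m - 1) j *
                     sin ((a + 1 - 2 * INR m + 2 * INR j) * t)) (2 * m - 1).
Proof.
  intros Hm. set (p := (2 * m - 1)%nat).
  assert (Hp : INR p = 2 * INR m - 1)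
    by (unfold p; rewrite minus_INR, mult_INR by lia; simpl; ring).
  pose proof (diff2_sin p t (INR m * PI) (a - INR p)) as Hsin.
  rewrite diff2_binom in Hsin.
  replace ((a - INR p + INR p) * t + INR m * PI - INR p * (PI / 2)) with (a * t + PI / 2) in Hsin
    by (rewrite Hp; field).
  rewrite sin_plus, cos_PI2, sin_PI2, Rpow_mult_distr in Hsin.
  replace (sin t ^ p * cos (a * t))
    with ((1 / 2) ^ p * (2 ^ p * sin t ^ p * (sin (a * t) * 0 + cos (a * t) * 1))).
  2: { assert (Hhalf : (1 / 2) ^ p * 2 ^ p = 1).
       { rewrite <- Rpow_mult_distr. replace (1 / 2 * 2) with 1 by field. apply pow1. }
       transitivity ((1 / 2) ^ p * 2 ^ p * (sin t ^ p * cos (a * t))); [ring |].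
       rewrite Hhalf. ring. }
  rewrite <- Hsin, Rmult_assoc. f_equal. rewrite scal_sum.
  apply sum_eq. intros j Hj.
  rewrite binom_C, sin_add_INR_mul_PI by lia.
  replace ((a - INR p + 2 * INR j) * t) with ((a + 1 - 2 * INR m + 2 * INR j) * t)
    by (rewrite Hp; ring).
  ring.
Qed.

(* The truncated subtraction in [dens_index] is exact when [2 m + 1 <= n]. *)
Definition dens_coef (m j : nat) : R :=
  (1 / 2) ^ (2 * m - 1) * (-1) ^ m * ((-1) ^ j * Binomial.C (2 * m - 1) j).

Definition dens_index (n m j : nat) : nat := n - 1 - 2 * m + 2 * j.

Lemma INR_dens_index n m j : (2 * m + 1 <= n)%nat ->
  INR (dens_index n m j) = INR n - 1 - 2 * INR m + 2 * INR j.
Proof.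
  intros H. unfold dens_index. rewrite plus_INR, !minus_INR by lia. rewrite !mult_INR.
  simpl. ring.
Qed.

Lemma cheb_density_decomp m n s : (1 <= m)%nat -> (2 * m + 2 <= n)%nat -> -1 <= s <= 1 ->
  chebT n s * ((1 - s ^ 2) ^ (m - 1) * sqrt (1 - s ^ 2)) =
  sum_f_R0 (fun j => dens_coef m j * chebUw (S (S (dens_index n m j))) s) (2 * m - 1).
Proof.
  intros Hm Hn Hs. unfold chebT, chebUw, dens_coef.
  assert (Hsin : sqrt (1 - s ^ 2) = sin (acos s)).
  { rewrite sin_acos by exact Hs. unfold Rsqr. f_equal. ring. }
  assert (Hpow : (1 - s ^ 2) ^ (m - 1) * sqrt (1 - s ^ 2) = sin (acos s) ^ (2 * m - 1)).
  { assert (E : 1 - s ^ 2 = sin (acos s) ^ 2).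
    { rewrite <- Hsin, pow2_sqrt; [reflexivity | nra]. }
    rewrite Hsin, E, <- pow_mult.
    replace (2 * m - 1)%nat with (S (2 * (m - 1))) by lia. simpl. ring. }
  rewrite Hpow, Rmult_comm, (sin_pow_odd_mul_cos m) by exact Hm.
  rewrite scal_sum. apply sum_eq. intros j Hj.
  rewrite !S_INR, INR_dens_index by lia.
  replace (INR n - 1 - 2 * INR m + 2 * INR j + 1 + 1) with (INR n + 1 - 2 * INR m + 2 * INR j)
    by ring.
  ring.
Qed.

Lemma is_PV_cheb_density m n y : (1 <= m)%nat -> (2 * m + 2 <= n)%nat -> -1 < y < 1 ->
  is_PV (fun s => chebT n s * ((1 - s ^ 2) ^ (m - 1) * sqrt (1 - s ^ 2))) y
    (sum_f_R0 (fun j => dens_coef m j * (- PI * chebT (S (S (dens_index n m j))) y)) (2 * m - 1)).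
Proof.
  intros Hm Hn Hy.
  apply is_PV_ext
    with (fun s => sum_f_R0 (fun j => dens_coef m j * chebUw (S (S (dens_index n m j))) s)
                            (2 * m - 1));
    [exact Hy | intros s Hs; symmetry; apply cheb_density_decomp; assumption |].
  apply is_PV_sum; [exact Hy | intros; apply continuous_chebUw |].
  intros j _. apply is_PV_chebUw; [exact Hy | lia].
Qed.

(** * Differentiating the principal value *)

Lemma is_derive_chebT k x : -1 < x < 1 -> is_derive (chebT (S k)) x (INR (S k) * chebU k x).
Proof.
  intros Hx. pose proof (sqrt_1_minus_sq_pos x Hx).
  unfold chebU. rewrite Nat.add_1_r, sin_acos by lra.
  replace (INR (S k) * (sin (INR (S k) * acos x) / sqrt (1 - x²)))
    with (INR (S k) * sin (INR (S k) * acos x) / sqrt (1 - x²)) by (field; lra).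
  apply is_derive_cos_mul_acos, Hx.
Qed.

Lemma is_derive_chebU k x : -1 < x < 1 ->
  is_derive (chebU (S k)) x
    (((INR k + 3) * chebU k x - (INR k + 1) * chebU (S (S k)) x) / (2 * (1 - x ^ 2))).
Proof.
  intros Hx. pose proof (sqrt_1_minus_sq_pos x Hx) as Hw.
  pose proof (sqrt_1_minus_sq_mul x ltac:(lra)) as Ew.
  set (K := INR k + 2).
  assert (HK : INR (S k + 1) = K) by (unfold K; rewrite Nat.add_1_r, !S_INR; ring).
  unfold chebU. rewrite HK.
  replace (((INR k + 3) * (sin (INR (k + 1) * acos x) / sin (acos x))
            - (INR k + 1) * (sin (INR (S (S k) + 1) * acos x) / sin (acos x)))
           / (2 * (1 - x ^ 2)))
    with ((- K * cos (K * acos x) / sqrt (1 - x²) * sin (acos x)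
           - sin (K * acos x) * (- (1) * cos (1 * acos x) / sqrt (1 - x²))) / sin (acos x) ^ 2).
  - apply (is_derive_div (fun s => sin (K * acos s)) (fun s => sin (acos s)));
      [apply is_derive_sin_mul_acos, Hx | | rewrite sin_acos; lra].
    apply (is_derive_ext (fun s => sin (1 * acos s))); [intros; rewrite Rmult_1_l; reflexivity |].
    apply is_derive_sin_mul_acos, Hx.
  - replace (INR (k + 1) * acos x) with (K * acos x - acos x)
      by (unfold K; rewrite plus_INR; simpl; ring).
    replace (INR (S (S k) + 1) * acos x) with (K * acos x + acos x)
      by (unfold K; rewrite Nat.add_1_r, !S_INR; ring).
    rewrite sin_minus, sin_plus, Rmult_1_l, cos_acos, sin_acos by lra.
    replace (1 - x ^ 2) with (sqrt (1 - x²) * sqrt (1 - x²)) by (rewrite Ew; unfold Rsqr; ring).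
    unfold K. field. lra.
Qed.

Lemma is_derive_sum_f_R0 (F : nat -> R -> R) (F' : nat -> R) x N :
  (forall j, (j <= N)%nat -> is_derive (F j) x (F' j)) ->
  is_derive (fun y => sum_f_R0 (fun j => F j y) N) x (sum_f_R0 F' N).
Proof.
  intros HF. induction N as [| N IH]; simpl; [apply HF; lia |].
  apply is_derive_Rplus; [apply IH; intros; apply HF; lia | apply HF; lia].
Qed.

Lemma is_FP_2_of_derive (D P P' : R -> R) r v :
  (forall y, -1 < y < 1 -> is_PV D y (P y)) ->
  (forall x, -1 < x < 1 -> is_derive P x (P' x)) ->
  is_derive P' r (2 * v) -> is_FP D 2 r v.
Proof.
  intros HPV HP HP'. exists P'. split.
  - intros x Hx. exists P. split; [exact HPV |].
    replace (INR 1 * P' x) with (P' x) by (simpl; ring). apply HP, Hx.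
  - replace (INR 2 * v) with (2 * v) by (simpl; ring). exact HP'.
Qed.

Lemma FP3_value_eq m n r : (1 <= m)%nat -> (2 * m + 2 <= n)%nat -> -1 < r < 1 ->
  2 * ((-1) ^ (m + 1) * (1 / 2) ^ (2 * m + 1) * (PI / (1 - r ^ 2)) *
       sum_f_R0 (fun j =>
         (-1) ^ j * Binomial.C (2 * m - 1) j * (INR n + 1 - 2 * INR m + 2 * INR j) *
         ((INR n + 2 - 2 * INR m + 2 * INR j) * chebU (n - 1 - 2 * m + 2 * j) r
          - (INR n - 2 * INR m + 2 * INR j) * chebU (n + 1 - 2 * m + 2 * j) r))
       (2 * m - 1)) =
  sum_f_R0 (fun j => dens_coef m j * (- PI * (INR (S (S (dens_index n m j))) *
    (((INR (dens_index n m j) + 3) * chebU (dens_index n m j) r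
      - (INR (dens_index n m j) + 1) * chebU (S (S (dens_index n m j))) r)
     / (2 * (1 - r ^ 2)))))) (2 * m - 1).
Proof.
  intros Hm Hn Hr.
  rewrite <- Rmult_assoc, scal_sum. apply sum_eq. intros j Hj.
  replace (n + 1 - 2 * m + 2 * j)%nat with (S (S (dens_index n m j))) by (unfold dens_index; lia).
  rewrite !S_INR, INR_dens_index by lia. unfold dens_coef, dens_index.
  replace (2 * m + 1)%nat with (2 * m - 1 + 2)%nat by lia.
  rewrite !pow_add. field. nra.
Qed.

Theorem mainTheorem5 (m n : nat) (r : R) :
  (1 <= m)%nat -> (2 * m + 2 <= n)%nat -> Rabs r < 1 ->
  is_FP (fun s => chebT n s * ((1 - s ^ 2) ^ (m - 1) * sqrt (1 - s ^ 2))) 2 r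
    ((-1) ^ (m + 1) * (1 / 2) ^ (2 * m + 1) * (PI / (1 - r ^ 2)) *
     sum_f_R0 (fun j =>
       (-1) ^ j * Binomial.C (2 * m - 1) j * (INR n + 1 - 2 * INR m + 2 * INR j) *
       ((INR n + 2 - 2 * INR m + 2 * INR j) * chebU (n - 1 - 2 * m + 2 * j) r
        - (INR n - 2 * INR m + 2 * INR j) * chebU (n + 1 - 2 * m + 2 * j) r))
     (2 * m - 1)).
Proof.
  intros Hm Hn Hr. apply Rabs_def2 in Hr.
  set (c := dens_coef m). set (q := dens_index n m).
  apply (is_FP_2_of_derive _
    (fun y => sum_f_R0 (fun j => c j * (- PI * chebT (S (S (q j))) y)) (2 * m - 1))
    (fun x => sum_f_R0 (fun j => c j * (- PI * (INR (S (S (q j))) * chebU (S (q j)) x)))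
                       (2 * m - 1))).
  - intros y Hy. apply is_PV_cheb_density; assumption.
  - intros x Hx. apply (is_derive_sum_f_R0 (fun j y => c j * (- PI * chebT (S (S (q j))) y))).
    intros j _. apply is_derive_scal, is_derive_scal, is_derive_chebT, Hx.
  - rewrite FP3_value_eq by (assumption || lra).
    apply (is_derive_sum_f_R0
             (fun j x => c j * (- PI * (INR (S (S (q j))) * chebU (S (q j)) x)))).
    intros j _. apply is_derive_scal, is_derive_scal, is_derive_scal, is_derive_chebU. lra.
Qed.
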